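(* Let $R\subseteq\mathbb N$ be a congruence-periodic sparse predicate, $d\in\mathbb N^+$, $\tilde R\subseteq^dR$, $n\in\mathbb N^+$, and $\mathbf A,\mathbf B$ $n$-tuples of operators on $R$. Then there is $\Delta_0$ such that for every $\Delta\in d\mathbb N$ with $\Delta\ge\Delta_0$ the following holds. For all $x,y_1,y_2\in\mathbb Z$, $u_1,\dots,u_n\in\tilde R\cup\{-\infty\}$ and $v_1,\dots,v_n\in\tilde R\cup\{+\infty\}$, if there is $z\in\tilde R^n_\Delta$ with $$y_1+\mathbf A\cdot z<x<y_2+\mathbf B\cdot z\ \wedge\ \bigwedge_{i=1}^nu_i\le z_i\le v_i\qquad(\dagger)$$ then either $v_1=+\infty$ and ($A_1=_R0$ and $B_1>_R0$, or $A_1<_R0$ and $B_1=_R0$), or there is $z\in\tilde R^n_\Delta$ satisfying $(\dagger)$ and one of: (i) $z_i=\sigma^\Delta z_{i+1}$ for some $1\le i\le n$ (with $z_{n+1}:=\min\tilde R$); (ii) $z_i\in\{u_i,v_i\}$ for some $1\le i\le n$; (iii) all $A_i,B_i$ are $\neq_R0$, and $z=P_\Delta(x-y_1;\mathbf A,\tilde R)$ or $z=P_\Delta(y_2-x;-\mathbf B,\tilde R)$.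
   Context: Let $R\subseteq\mathbb N$ be infinite, enumerated increasingly as $(r_n)_{n\in\mathbb N}$; $\sigma:R\to R$ is the successor map, $\sigma^k$ its iterate ($\sigma^0=\mathrm{id}$). An operator on $R$ is a function $R\to\mathbb Z$, $z\mapsto\sum_{i=0}^ma_i\sigma^i(z)$, $a_i\in\mathbb Z$. $A=_R0$ means $Az=0$ for all $z\in R$; $A>_R0$ (resp. $<_R0$) means $Az>0$ (resp. $<0$) for all but finitely many $z$. $R$ is sparse if every operator $A$ satisfies (S1) $A=_R0$ or $A>_R0$ or $A<_R0$, and (S2) if $A>_R0$ there is $\Delta$ with $A(\sigma^\Delta z)>z$ for all $z\in R$. Congruence-periodic: for each $m\in\mathbb N^+$, $(r_n\bmod m)$ is eventually periodic. $\tilde R\subseteq^dR$ means $\tilde R=\{r_{N+dt}:t\in\mathbb N\}$ for some $N\in\mathbb N$. $\mathbf A\cdot z=\sum A_iz_i$; $\mathbf A\cdot S=\{\mathbf A\cdot z:z\in S\}$; $-\mathbf B=(-B_1,\dots,-B_n)$. $\tilde R^n_\Delta=\{z\in\tilde R^n:z_i\ge\sigma^\Delta z_{i+1}\ (1\le i\le n)\}$ with $z_{n+1}:=\min\tilde R$. For $\mathbf A$ with all entries $\neq_R0$ and $\Delta$ large enough that $z\mapsto\mathbf A\cdot z$ is injective on $R^n_\Delta$: $\min_{\mathbf A}S$/$\max_{\mathbf A}S$ is the unique $z\in S$ minimising/maximising $\mathbf A\cdot z$ (when bounded), and $P_\Delta(x;\mathbf A,\tilde R)=\max_{\mathbf A}\{z\in\tilde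 R^n_\Delta:\mathbf A\cdot z<x\}$ if $x>\inf\mathbf A\cdot\tilde R^n_\Delta$, and $\min_{\mathbf A}\tilde R^n_\Delta$ otherwise. *)

From mathcomp Require Import all_boot all_order all_algebra.
Set Implicit Arguments. Unset Strict Implicit. Unset Printing Implicit Defensive.
Import Order.TTheory GRing.Theory Num.Theory.
Local Open Scope ring_scope.

(* R is given by its increasing enumeration r : nat -> nat (R = range r).
   An element of R is r k; sigma^j (r k) = r (k + j).
   An operator sum_{i<=m} a_i sigma^i is its coefficient list a = [a_0;...;a_m]. *)
Definition op := seq int.

Definition strictly_increasing (r : nat -> nat) : Prop := forall k, (r k < r k.+1)%N.

Definition opv (r : nat -> nat) (a : op) (k : nat) : int :=
  \sum_(i < size a) a`_i * ((r (k + i)%N)%:Z).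

Definition op_eq0 r (a : op) : Prop := forall k, opv r a k = 0.
Definition op_pos r (a : op) : Prop := exists K, forall k, (K <= k)%N -> 0 < opv r a k.
Definition op_neg r (a : op) : Prop := exists K, forall k, (K <= k)%N -> opv r a k < 0.

Definition sparse (r : nat -> nat) : Prop :=
  forall a : op,
    (op_eq0 r a \/ op_pos r a \/ op_neg r a) /\
    (op_pos r a -> exists D : nat, forall k, (r k)%:Z < opv r a (k + D)%N).

Definition congruence_periodic (r : nat -> nat) : Prop :=
  forall m : nat, (0 < m)%N ->
    exists p K : nat, (0 < p)%N /\ forall k, (K <= k)%N -> (r (k + p) %% m = r k %% m)%N.

Definition opp_op (a : op) : op := map (fun c => - c) a.

(* tuples are functions nat -> _, only indices 0..n-1 matter (paper's 1..n) *)
Definition dot r (n : nat) (A : nat -> op) (z : nat -> nat) : int :=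
  \sum_(i < n) opv r (A i) (z i).

(* tilde R = { r_(N + d t) : t } ; membership of an index, resp. of an element *)
Definition inRt_idx (N d k : nat) : Prop := exists t, k = (N + d * t)%N.
Definition inRt_elt r (N d e : nat) : Prop := exists t, e = r (N + d * t)%N.

(* z (given by indices z i, i.e. z_i = r (z i)) lies in tilde R^n_Delta,
   with z_{n+1} := min tilde R = r N *)
Definition inRnD r (N d Delta n : nat) (z : nat -> nat) : Prop :=
  forall i, (i < n)%N ->
    inRt_idx N d (z i) /\
    (r ((if i.+1 == n then N else z i.+1) + Delta)%N <= r (z i))%N.

Definition lbnd (u : option nat) (e : nat) : Prop :=
  match u with None => True | Some a => (a <= e)%N end.
Definition ubnd (v : option nat) (e : nat) : Prop :=
  match v with None => True | Some b => (e <= b)%N end.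

Definition dagger r n (A B : nat -> op) (x y1 y2 : int)
  (u : nat -> option nat) (v : nat -> option nat) (z : nat -> nat) : Prop :=
  y1 + dot r n A z < x /\ x < y2 + dot r n B z /\
  forall i, (i < n)%N -> lbnd (u i) (r (z i)) /\ ubnd (v i) (r (z i)).

Definition dot_inj r (Delta n : nat) (A : nat -> op) : Prop :=
  forall z w, inRnD r 0 1 Delta n z -> inRnD r 0 1 Delta n w ->
    dot r n A z = dot r n A w -> forall i, (i < n)%N -> z i = w i.

(* z = P_Delta(x; A, tilde R) (characterisation; unique when dot_inj holds) *)
Definition isP r (N d Delta n : nat) (A : nat -> op) (x : int) (z : nat -> nat) : Prop :=
  inRnD r N d Delta n z /\
  ((exists w, inRnD r N d Delta n w /\ dot r n A w < x) ->
     dot r n A z < x /\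
     forall w, inRnD r N d Delta n w -> dot r n A w < x -> dot r n A w <= dot r n A z) /\
  (~ (exists w, inRnD r N d Delta n w /\ dot r n A w < x) ->
     forall w, inRnD r N d Delta n w -> dot r n A z <= dot r n A w).

(* For a non-zero operator a, sparseness applied to the difference operator
   sigma a - a shows that a is eventually strictly monotone and that its
   increments eventually exceed any fixed multiple of the elements of R; since R
   grows at least geometrically, for Delta large the change of A.z caused by
   moving z_j dominates every change of the later coordinates, which lie Delta
   steps below. So z |-> A.z compares tuples of R^n_Delta lexicographically and
   is injective.
   Starting from a solution z of (dagger), move a single coordinate along tilde R
   (in steps of d) as long as (dagger) persists. If some A_i or B_i vanishes,
   coordinate i can be moved in a direction in which neither inequality gets
   worse, and the walk only stops at a tight constraint (i) or (ii); the one
   exception is an upward walk of z_1 with v_1 = +oo. If no operator vanishes,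
   lower z_n until the next step would break (dagger): by lexicographic
   dominance the last tuple is P_Delta for the inequality that breaks. *)

From Stdlib Require Import Classical FunctionalExtensionality.
From mathcomp Require Import all_boot all_order all_algebra zify.
Import Order.TTheory GRing.Theory Num.Theory.
Set Implicit Arguments. Unset Strict Implicit. Unset Printing Implicit Defensive.
Local Open Scope ring_scope.

Section Enumeration.
Variable r : nat -> nat.
Hypothesis hr : strictly_increasing r.

Lemma leq_enum : {mono r : a b / (a <= b)%N}.
Proof. exact/leq_mono/(homo_ltn ltn_trans hr). Qed.

Lemma ltn_enum : {mono r : a b / (a < b)%N}.
Proof. by move=> a b; rewrite !ltnNge leq_enum. Qed.

Lemma leq_id_enum k : (k <= r k)%N.
Proof. by elim: k => // k IH; apply: leq_ltn_trans IH (hr k). Qed.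

End Enumeration.

Lemma opv_widen r (a : op) m k : (size a <= m)%N ->
  opv r a k = \sum_(i < m) a`_i * (r (k + i)%N)%:Z.
Proof.
move=> hm; rewrite /opv (big_ord_widen m (fun i => a`_i * (r (k + i)%N)%:Z) hm).
rewrite big_mkcond /=; apply: eq_bigr => i _.
by case: ifP => // /negbT; rewrite -leqNgt => h; rewrite nth_default // mul0r.
Qed.

Lemma opv_opp r a k : opv r (opp_op a) k = - opv r a k.
Proof.
rewrite /opv /opp_op size_map -sumrN; apply: eq_bigr => i _.
by rewrite (nth_map 0) // mulNr.
Qed.

Definition op_sub (p q : op) : op :=
  mkseq (fun i => p`_i - q`_i) (maxn (size p) (size q)).

Lemma opv_sub r p q k : opv r (op_sub p q) k = opv r p k - opv r q k.
Proof.
rewrite (@opv_widen r p (maxn (size p) (size q)) k) ?leq_maxl //.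
rewrite (@opv_widen r q (maxn (size p) (size q)) k) ?leq_maxr //.
rewrite /opv /op_sub size_mkseq -sumrB; apply: eq_bigr => i _.
by rewrite nth_mkseq // mulrBl.
Qed.

Lemma opv_shift r (a : op) k : opv r (0 :: a) k = opv r a k.+1.
Proof.
rewrite /opv /= big_ord_recl /= mul0r add0r; apply: eq_bigr => i _.
by rewrite /bump /= addSn addnS.
Qed.

Definition op_delta (a : op) : op := op_sub (0 :: a) a.

Lemma opv_delta r a k : opv r (op_delta a) k = opv r a k.+1 - opv r a k.
Proof. by rewrite /op_delta opv_sub opv_shift. Qed.

Definition op_l1 (a : op) : int := \sum_(i < size a) `|a`_i|.

Lemma op_l1_ge0 a : 0 <= op_l1 a.
Proof. exact: sumr_ge0. Qed.

Lemma norm_opv_le r (hr : strictly_increasing r) a k m : (size a <= m)%N ->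
  `|opv r a k| <= op_l1 a * (r (k + m)%N)%:Z.
Proof.
move=> hm; rewrite /op_l1 mulr_suml; apply: le_trans (ler_norm_sum _ _ _) _.
apply: ler_sum => i _; rewrite normrM ler_wpM2l ?normr_ge0 //.
rewrite ger0_norm // lez_nat leq_enum // leq_add2l.
exact: leq_trans (ltnW (ltn_ord i)) hm.
Qed.

(** * Eventual monotonicity *)

Definition incr_from r K (a : op) :=
  forall k k', (K <= k)%N -> (k < k')%N -> opv r a k < opv r a k'.

Lemma incr_from_le r K K' a : (K <= K')%N -> incr_from r K a -> incr_from r K' a.
Proof. by move=> hK h k k' hk; apply: h; apply: leq_trans hk. Qed.

Lemma incr_fromP r K a : (forall k, (K <= k)%N -> opv r a k < opv r a k.+1) ->
  incr_from r K a.
Proof.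
move=> h k k' hk hkk'; rewrite -(subnKC hk) -(subnKC (leq_trans hk (ltnW hkk'))).
have hf : {homo (fun j => opv r a (K + j)) : i j / (i < j)%N >-> i < j}.
  by apply: homo_ltn => [y x z|j]; [apply: lt_trans | rewrite addnS; apply: h; rewrite leq_addr].
by apply: hf; rewrite ltn_sub2r // (leq_ltn_trans hk hkk').
Qed.

Definition nondecr_from r K (a : op) :=
  forall k k', (K <= k)%N -> (k <= k')%N -> opv r a k <= opv r a k'.

Lemma incr_from_nondecr r K a : incr_from r K a -> nondecr_from r K a.
Proof. by move=> h k k' hk; rewrite leq_eqVlt => /predU1P [-> //|/h]; move/(_ hk)/ltW. Qed.

Lemma incr_from_step_le r K a k p : incr_from r K a -> (K <= k <= p)%N ->
  `|opv r a p.+1 - opv r a p| <= `|opv r a p.+1 - opv r a k|.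
Proof.
move=> ha /andP [hKk hkp]; have hp := ha p p.+1 (leq_trans hKk hkp) (ltnSn p).
have hkp' := incr_from_nondecr ha hKk hkp.
by rewrite !gtr0_norm ?subr_gt0 ?lerD2l ?lerN2 //; apply: le_lt_trans hkp' hp.
Qed.

Definition monotone_from r K a := incr_from r K a \/ incr_from r K (opp_op a).

Lemma monotone_from_opp r K a : monotone_from r K a -> monotone_from r K (opp_op a).
Proof.
by case=> h; [right|left] => k k' hk hkk'; move: (h k k' hk hkk'); rewrite !opv_opp ?opprK.
Qed.

Definition trend_from r K a := op_eq0 r a \/
  (op_pos r a /\ incr_from r K a) \/ (op_neg r a /\ incr_from r K (opp_op a)).

Lemma trend_from_le r K K' a : (K <= K')%N -> trend_from r K a -> trend_from r K' a.
Proof.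
move=> hK [h|[[hs h]|[hs h]]]; [by left|right; left|right; right];
  by split => //; apply: incr_from_le hK h.
Qed.

Lemma trend_monotone r K a : ~ op_eq0 r a -> trend_from r K a -> monotone_from r K a.
Proof. by move=> ha [//|[[_ h]|[_ h]]]; [left|right]. Qed.

Lemma op_eq0_nondecr r K a : op_eq0 r a -> nondecr_from r K a /\ nondecr_from r K (opp_op a).
Proof. by move=> h0; split=> k k' _ _; rewrite ?opv_opp !h0. Qed.

Lemma zero_operator_direction r K a b : trend_from r K a -> trend_from r K b ->
  op_eq0 r a \/ op_eq0 r b ->
  (nondecr_from r K a /\ nondecr_from r K (opp_op b)) \/
  [/\ nondecr_from r K (opp_op a), nondecr_from r K b &
      (op_eq0 r a /\ op_pos r b) \/ (op_neg r a /\ op_eq0 r b)].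
Proof.
have h0K c := @op_eq0_nondecr r K c.
move=> ha hb [h0|h0]; have [hC hC'] := h0K _ h0.
  case: hb => [/h0K [_ hB]|[[hp /incr_from_nondecr hB]|[_ /incr_from_nondecr hB]]].
  - by left.
  - by right; split=> //; left.
  - by left.
case: ha => [/h0K [hA _]|[[_ /incr_from_nondecr hA]|[hn /incr_from_nondecr hA]]].
- by left.
- by left.
- by right; split=> //; right.
Qed.

Lemma op_neq0_opp r a : ~ op_eq0 r a -> ~ op_eq0 r (opp_op a).
Proof. by move=> ha h0; apply: ha => k; apply: oppr_inj; rewrite -opv_opp h0. Qed.

Lemma uniform_threshold n (P : nat -> nat -> Prop) :
  (forall i, (i < n)%N -> exists T, forall D, (T <= D)%N -> P i D) ->
  exists T, forall D, (T <= D)%N -> forall i, (i < n)%N -> P i D.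
Proof.
elim: n => [|n IH] h; first by exists 0%N.
have [T1 h1] := IH (fun i hi => h i (ltnW hi)).
have [T2 h2] := h n (ltnSn n).
exists (maxn T1 T2) => D; rewrite geq_max => /andP [hD1 hD2] i.
by rewrite ltnS leq_eqVlt => /predU1P [->|hi]; [apply: h2 | apply: h1].
Qed.

Section Sparse.
Variable r : nat -> nat.
Hypothesis hr : strictly_increasing r.
Hypothesis hsp : sparse r.

Lemma op_pos_opp a : op_neg r a -> op_pos r (opp_op a).
Proof. by case=> K hK; exists K => k hk; rewrite opv_opp oppr_gt0 hK. Qed.

Lemma op_neg_opp a : op_pos r a -> op_neg r (opp_op a).
Proof. by case=> K hK; exists K => k hk; rewrite opv_opp oppr_lt0 hK. Qed.

Lemma op_neq0_sign a : ~ op_eq0 r a -> op_pos r a \/ op_neg r a.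
Proof. by have [[h|h] _] := hsp a. Qed.

Lemma op_pos_unbounded a : op_pos r a ->
  forall (c : int) K, exists k, (K <= k)%N /\ c < opv r a k.
Proof.
move=> hp c K; have [_ /(_ hp) [D hD]] := hsp a.
exists ((`|c|%N + K) + D)%N; split; first by lia.
apply: le_lt_trans (hD _); apply: le_trans (ler_norm c) _.
rewrite -[`|c|]abszE lez_nat; exact: leq_trans (leq_addr K _) (leq_id_enum hr _).
Qed.

Lemma incr_from_not_neg K a : incr_from r K a -> ~ op_neg r a.
Proof.
move=> ha /op_pos_opp/op_pos_unbounded/(_ (- opv r a K) K) [k [hk]].
rewrite opv_opp ltrN2; case: ltngtP hk => // [hlt _|-> _]; last by rewrite ltxx.
by move/lt_trans/(_ (ha _ _ (leqnn K) hlt)); rewrite ltxx.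
Qed.

Lemma op_delta_neq0 a : ~ op_eq0 r a -> ~ op_eq0 r (op_delta a).
Proof.
move=> ha h0.
have hc k : opv r a k = opv r a 0.
  by elim: k => // k <-; apply/eqP; rewrite -subr_eq0 -opv_delta h0.
have [hp|hn] := op_neq0_sign ha.
  by have [k [_]] := op_pos_unbounded hp (opv r a 0) 0; rewrite hc ltxx.
have [k [_]] := op_pos_unbounded (op_pos_opp hn) (- opv r a 0) 0.
by rewrite opv_opp hc ltxx.
Qed.

Lemma trend_eventually a : exists K, trend_from r K a.
Proof.
have [h0|ha] := classic (op_eq0 r a); first by exists 0%N; left.
have [[K hK]|[K hK]] := op_neq0_sign (op_delta_neq0 ha); exists K; right.
- have hinc : incr_from r K a.
    by apply: incr_fromP => k /hK; rewrite opv_delta subr_gt0.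
  left; split => //; have [//|hn] := op_neq0_sign ha.
  by have := incr_from_not_neg hinc hn.
- have hinc : incr_from r K (opp_op a).
    by apply: incr_fromP => k /hK; rewrite opv_delta !opv_opp subr_lt0 ltrN2.
  right; split => //; have [hp|//] := op_neq0_sign ha.
  by have := incr_from_not_neg hinc (op_neg_opp hp).
Qed.

Lemma trend_uniform n (F : nat -> op) :
  exists K, forall D, (K <= D)%N -> forall i, (i < n)%N -> trend_from r D (F i).
Proof.
apply: uniform_threshold => i _; have [K hK] := trend_eventually (F i).
by exists K => D hD; apply: trend_from_le hD hK.
Qed.

Lemma delta_exceeds a : ~ op_eq0 r a ->
  exists D, forall j, (r j)%:Z < `|opv r a (j + D)%N.+1 - opv r a (j + D)%N|.
Proof.
move=> /op_delta_neq0/op_neq0_sign [hp|/op_pos_opp hp].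
  have [_ /(_ hp) [D hD]] := hsp (op_delta a); exists D => j.
  by apply: lt_le_trans (hD j) _; rewrite opv_delta ler_norm.
have [_ /(_ hp) [D hD]] := hsp (opp_op (op_delta a)); exists D => j.
by apply: lt_le_trans (hD j) _; rewrite opv_opp opv_delta -normrN ler_norm.
Qed.

Lemma enum_doubling : exists D, forall k t, (2 ^ t * r k <= r (k + t * D))%N.
Proof.
pose a : op := [:: -1; 1].
have ha k : opv r a k = (r k.+1)%:Z - (r k)%:Z.
  rewrite /opv /= big_ord_recl big_ord_recl big_ord0 /= /bump /=.
  by rewrite addn0 addn1 addr0 mulN1r mul1r addrC.
have hp : op_pos r a by exists 0%N => k _; rewrite ha subr_gt0 ltz_nat hr.
have [_ /(_ hp) [D hD]] := hsp a.
have h2 j : (2 * r j <= r (j + D.+1))%N.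
  have := hD j; rewrite ha -addnS => h.
  have : (r j <= r (j + D))%N by rewrite leq_enum // leq_addr.
  lia.
exists D.+1 => k t; elim: t k => [|t IH] k; first by rewrite expn0 mul1n addn0.
rewrite expnS -mulnA; apply: leq_trans (leq_mul (leqnn 2) (IH k)) _.
apply: leq_trans (h2 _) _; rewrite leq_enum //; lia.
Qed.

Lemma increment_dominates a (M L : nat) : ~ op_eq0 r a -> exists T, forall D, (T <= D)%N ->
  forall m k k', (D <= k)%N -> (k < k')%N -> (m + D <= k')%N ->
  ((M * r (m + L)%N)%N)%:Z < `|opv r a k' - opv r a k|.
Proof.
move=> ha; have [K /(trend_monotone ha) hK] := trend_eventually a.
have [Ds hDs] := delta_exceeds ha; have [Dg hDg] := enum_doubling.
exists (K + Ds + L + M * Dg).+1 => D hD m k [//|p] hDk hkp hp.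
have hstep : `|opv r a p.+1 - opv r a p| <= `|opv r a p.+1 - opv r a k|.
  have hKkp : (K <= k <= p)%N by apply/andP; split; lia.
  case: hK => hK; first exact: incr_from_step_le hK hKkp.
  by have := incr_from_step_le hK hKkp; rewrite !opv_opp -!opprD !normrN.
(* |a(p+1) - a(p)| > r(p - Ds) >= 2^M r(m + L) >= M r(m + L) *)
apply: lt_le_trans hstep; rewrite -(subnK (_ : Ds <= p)%N); last by lia.
apply: le_lt_trans (hDs _); rewrite lez_nat.
apply: leq_trans (leq_mul (ltnW (ltn_expl M (ltnSn 1))) (leqnn _)) _.
apply: leq_trans (hDg _ M) _; rewrite leq_enum //; lia.
Qed.

End Sparse.

Definition upd (z : nat -> nat) (i k : nat) : nat -> nat :=
  fun j => if j == i then k else z j.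

Lemma upd_same z i k : upd z i k i = k.
Proof. by rewrite /upd eqxx. Qed.

Lemma upd_ne z i k j : j != i -> upd z i k j = z j.
Proof. by move=> h; rewrite /upd (negbTE h). Qed.

Lemma upd_id z i : upd z i (z i) = z.
Proof. by apply: functional_extensionality => j; rewrite /upd; case: eqP => [->|]. Qed.

Lemma upd_upd (z : nat -> nat) i k k' : upd (upd z i k) i k' = upd z i k'.
Proof. by apply: functional_extensionality => j; rewrite /upd; case: eqP. Qed.

Definition next_coord N n (z : nat -> nat) i := if i.+1 == n then N else z i.+1.

Lemma next_coord_upd N n z i k : next_coord N n (upd z i k) i = next_coord N n z i.
Proof. by rewrite /next_coord upd_ne // gtn_eqF. Qed.

Lemma eq_dot r n A z w : (forall i, (i < n)%N -> z i = w i) ->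
  dot r n A z = dot r n A w.
Proof. by move=> h; apply: eq_bigr => i _; rewrite h. Qed.

Lemma dot_upd r n A z i k : (i < n)%N ->
  dot r n A (upd z i k) = dot r n A z + (opv r (A i) k - opv r (A i) (z i)).
Proof.
move=> hi; rewrite /dot (bigD1 (Ordinal hi)) // [in RHS](bigD1 (Ordinal hi)) // upd_same.
rewrite (eq_bigr (fun j : 'I_n => opv r (A j) (z j))) => [|j hj]; last first.
  by rewrite upd_ne //; move: hj; rewrite -(inj_eq val_inj).
by rewrite /= addrAC (addrC (opv r (A i) (z i))) subrK.
Qed.

Lemma dot_opp r n B z : dot r n (fun i => opp_op (B i)) z = - dot r n B z.
Proof. by rewrite /dot -sumrN; apply: eq_bigr => i _; rewrite opv_opp. Qed.

Lemma dot_sub_tail r n F z w j : (j < n)%N -> (forall i, (i < j)%N -> z i = w i) ->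
  dot r n F w - dot r n F z - (opv r (F j) (w j) - opv r (F j) (z j)) =
  \sum_(j.+1 <= i < n) (opv r (F i) (w i) - opv r (F i) (z i)).
Proof.
move=> hj hpre; rewrite /dot -sumrB.
rewrite -(big_mkord xpredT (fun i => opv r (F i) (w i) - opv r (F i) (z i))).
rewrite (big_cat_nat (leq0n j.+1) hj) /= big_nat_recr //= big_nat_cond big1 ?add0r.
  by rewrite addrAC subrr add0r.
by move=> i /andP [/andP [_ hi] _]; rewrite hpre // subrr.
Qed.

Lemma inRt_idx_step N d a b : (0 < d)%N -> inRt_idx N d a -> inRt_idx N d b ->
  (a < b)%N -> (a + d <= b)%N.
Proof.
move=> hd [s ->] [t ->]; rewrite ltn_add2l ltn_pmul2l // => hst.
by rewrite -addnA -mulnSr leq_add2l leq_pmul2l.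
Qed.

Lemma inRt_idx_addD N d a D : (d %| D)%N -> inRt_idx N d a -> inRt_idx N d (a + D).
Proof. by move=> /dvdnP [q ->] [t ->]; exists (t + q); lia. Qed.

Lemma inRt_idx_subd N d k : (0 < d)%N -> inRt_idx N d k -> (N + d <= k)%N ->
  inRt_idx N d (k - d).
Proof. by move=> hd [[|t] ->]; rewrite ?muln0 ?mulnS; [lia | exists t; lia]. Qed.

Section Tuples.
Variable r : nat -> nat.
Hypothesis hr : strictly_increasing r.

Lemma inRnD_gap N d D n z i : inRnD r N d D n z -> (i < n)%N ->
  (next_coord N n z i + D <= z i)%N.
Proof. by move=> hz /hz [_]; rewrite leq_enum. Qed.

Lemma inRnD_full N d D n z : inRnD r N d D n z -> inRnD r 0 1 D n z.
Proof.
move=> hz i hi; split; first by exists (z i); rewrite mul1n.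
by have := inRnD_gap hz hi; rewrite leq_enum // /next_coord; case: ifP => _; lia.
Qed.

Lemma inRnD_nonincr N d D n z i i' : inRnD r N d D n z ->
  (i <= i')%N -> (i' < n)%N -> (z i' <= z i)%N.
Proof.
move=> hz hii'; elim: i' hii' => [|i' IH]; first by rewrite leqn0 => /eqP ->.
rewrite leq_eqVlt => /predU1P [<- //|hl] hn.
have := inRnD_gap hz (ltnW hn); rewrite /next_coord (ltn_eqF hn).
have := IH hl (ltnW hn); lia.
Qed.

End Tuples.

(** * Lexicographic dominance *)

Definition lex_dominant r D n (F : nat -> op) :=
  forall z w, inRnD r 0 1 D n z -> inRnD r 0 1 D n w ->
  forall j, (j < n)%N -> (forall i, (i < j)%N -> z i = w i) -> z j <> w j ->
  `|dot r n F w - dot r n F z - (opv r (F j) (w j) - opv r (F j) (z j))|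
    < `|opv r (F j) (w j) - opv r (F j) (z j)|.

Lemma norm_dot_tail_le r (hr : strictly_increasing r) D n F z w j L :
  (j < n)%N -> inRnD r 0 1 D n z -> inRnD r 0 1 D n w ->
  (forall i, (i < n)%N -> (size (F i) <= L)%N) ->
  `|\sum_(j.+1 <= i < n) (opv r (F i) (w i) - opv r (F i) (z i))|
    <= \sum_(i < n) op_l1 (F i) *
       (2 * (r (next_coord 0 n (fun i => maxn (z i) (w i)) j + L)%N)%:Z).
Proof.
move=> hj hz hw hL; set R := (r (_ + L)%N)%:Z.
apply: le_trans (ler_norm_sum _ _ _) _.
apply: (@le_trans _ _ (\sum_(j.+1 <= i < n) (op_l1 (F i) * (2 * R)))).
  rewrite big_nat_cond [X in _ <= X]big_nat_cond; apply: ler_sum => i /andP [/andP [hji hin] _].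
  have hm : (maxn (z i) (w i) <= next_coord 0 n (fun i => maxn (z i) (w i)) j)%N.
    rewrite /next_coord ltn_eqF ?(leq_ltn_trans hji hin) //= geq_max !leq_max.
    by rewrite (inRnD_nonincr hr hz hji hin) (inRnD_nonincr hr hw hji hin) orbT.
  have hR y : (y <= maxn (z i) (w i))%N -> `|opv r (F i) y| <= op_l1 (F i) * R.
    move=> hy; apply: le_trans (norm_opv_le hr _ (hL i hin)) _.
    by rewrite ler_wpM2l ?op_l1_ge0 // lez_nat leq_enum // leq_add2r (leq_trans hy hm).
  have -> : op_l1 (F i) * (2 * R) = op_l1 (F i) * R + op_l1 (F i) * R.
    by rewrite mulrCA mulr_natl mulr2n.
  by apply: le_trans (ler_normB _ _) _; apply: lerD; apply: hR; rewrite leq_max leqnn ?orbT.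
rewrite -[X in _ <= X](big_mkord xpredT (fun i => op_l1 (F i) * (2 * R))).
rewrite [X in _ <= X](big_cat_nat (leq0n j.+1) hj) /= lerDr.
by apply: sumr_ge0 => i _; rewrite mulr_ge0 ?op_l1_ge0.
Qed.

Lemma lex_dominant_eventually r (hr : strictly_increasing r) (hsp : sparse r) n F :
  (forall i, (i < n)%N -> ~ op_eq0 r (F i)) ->
  exists T, forall D, (T <= D)%N -> lex_dominant r D n F.
Proof.
move=> hF; pose C := \sum_(i < n) op_l1 (F i); pose L := \max_(i < n) size (F i).
have hL i : (i < n)%N -> (size (F i) <= L)%N.
  by move=> hi; apply: (leq_bigmax (F := fun i : 'I_n => size (F i)) (Ordinal hi)).
have [T hT] := @uniform_threshold n _
  (fun i hi => increment_dominates hr hsp (absz (2 * C)) L (hF i hi)).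
exists T => D hD z w hz hw j hj hpre.
wlog hlt : z w hz hw hpre / (z j < w j)%N => [hwlog|_].
  case: (ltngtP (z j) (w j)) => hc hne; [exact: hwlog | | by []].
  by have := hwlog w z hw hz (fun i hi => esym (hpre i hi)) hc (nesym hne); lia.
rewrite dot_sub_tail //; apply: le_lt_trans (norm_dot_tail_le hr hj hz hw hL) _.
set m := next_coord 0 n _ j.
have hmw : (m + D <= w j)%N.
  have := inRnD_gap hr hz hj; have := inRnD_gap hr hw hj.
  by rewrite /m /next_coord /=; case: ifP => _; lia.
have hDz : (D <= z j)%N by have := inRnD_gap hr hz hj; lia.
apply: le_lt_trans (hT D hD j hj m (z j) (w j) hDz hlt hmw).
by rewrite -mulr_suml PoszM mulrA [_ * 2]mulrC ler_wpM2r // abszE ler_norm.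
Qed.

Lemma first_difference n (z w : nat -> nat) : (exists i, (i < n)%N /\ z i <> w i) ->
  exists j, [/\ (j < n)%N, z j <> w j & forall i, (i < j)%N -> z i = w i].
Proof.
move=> hex; have hex' : exists i, (i < n)%N && (z i != w i).
  by case: hex => i [hi hne]; exists i; rewrite hi; apply/eqP.
case: (ex_minnP hex') => j /andP [hj /eqP hne] hmin; exists j; split => // i hij.
apply/eqP; apply: contraTT (hij) => hne'.
by rewrite -leqNgt hmin // hne' (ltn_trans hij hj).
Qed.

Lemma lex_dominant_dot_inj r D n F : lex_dominant r D n F -> dot_inj r D n F.
Proof.
move=> hlex z w hz hw heq i hi; apply: NNPP => hne.
have [j [hj hjne hpre]] := first_difference (ex_intro _ i (conj hi hne)).
by have := hlex z w hz hw j hj hpre hjne; rewrite heq subrr sub0r normrN ltxx.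
Qed.

Lemma dot_le_last_step r (hr : strictly_increasing r) N d D n F (c : int) z k w :
  (0 < d)%N -> (0 < n)%N -> incr_from r D (opp_op (F n.-1)) ->
  inRnD r N d D n z -> inRnD r N d D n (upd z n.-1 k) -> (k + d = z n.-1)%N ->
  inRnD r N d D n w -> (forall i, (i < n.-1)%N -> z i = w i) ->
  c <= dot r n F (upd z n.-1 k) -> dot r n F w < c -> dot r n F w <= dot r n F z.
Proof.
move=> hd hn hdec hz hz' hk hw hpre hcz' hwc.
have hn1 : (n.-1 < n)%N by rewrite prednK.
have hw' : dot r n F w = dot r n F (upd z n.-1 (w n.-1)).
  apply: eq_dot => i hi; rewrite /upd; case: eqP => [-> //|/eqP hi'].
  by apply/esym/hpre; rewrite ltn_neqAle hi' -ltnS prednK.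
rewrite hw' dot_upd // in hwc *; rewrite dot_upd // in hcz'.
have hDk : (D <= k)%N by have := inRnD_gap hr hz' hn1; rewrite upd_same; lia.
have hDw : (D <= w n.-1)%N by have := inRnD_gap hr hw hn1; lia.
case: (ltngtP (w n.-1) (z n.-1)) => [hlt|hgt|->]; last by rewrite subrr addr0.
  have hwk : (w n.-1 <= k)%N.
    have [[hzN _] [hwN _]] := (hz n.-1 hn1, hw n.-1 hn1).
    by have := inRt_idx_step hd hwN hzN hlt; lia.
  by have := incr_from_nondecr hdec hDw hwk; rewrite !opv_opp; lia.
have hkz : (k <= z n.-1)%N by lia.
by have := hdec _ _ (leq_trans hDk hkz) hgt; rewrite !opv_opp; lia.
Qed.

Lemma isP_of_last_step r (hr : strictly_increasing r) N d D n F (c : int) z k :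
  (0 < d)%N -> (0 < n)%N -> lex_dominant r D n F -> monotone_from r D (F n.-1) ->
  inRnD r N d D n z -> inRnD r N d D n (upd z n.-1 k) -> (k + d = z n.-1)%N ->
  dot r n F z < c -> c <= dot r n F (upd z n.-1 k) -> isP r N d D n F c z.
Proof.
move=> hd hn hlex hmono hz hz' hk hzc hcz'.
have hn1 : (n.-1 < n)%N by rewrite prednK.
have hDk : (D <= k)%N by have := inRnD_gap hr hz' hn1; rewrite upd_same; lia.
(* were F_n eventually increasing, lowering z_n would push F.z below c *)
have hdec : incr_from r D (opp_op (F n.-1)).
  case: hmono => // hinc; have hkz : (k < z n.-1)%N by lia.
  by have := hinc _ _ hDk hkz; rewrite dot_upd // in hcz'; lia.
split=> //; split=> [_|[]]; last by exists z.
split=> // w hw hwc.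
have [hne|hsame] := classic (exists i, (i < n.-1)%N /\ z i <> w i); last first.
  apply: (dot_le_last_step hr hd hn hdec hz hz' hk hw _ hcz' hwc) => i hi.
  by apply: NNPP => hne; apply: hsame; exists i.
(* z and its lowering first differ from w at the same j < n - 1, with the same
   value there, so F.w lies on the same side of both *)
have [j [hj hjne hpre]] := first_difference hne.
have hjn : (j < n)%N := ltn_trans hj hn1.
have hz'j : upd z n.-1 k j = z j by rewrite upd_ne // neq_ltn hj.
have hpre' i : (i < j)%N -> upd z n.-1 k i = w i.
  by move=> hi; rewrite upd_ne ?hpre // neq_ltn (ltn_trans hi hj).
have hjne' : upd z n.-1 k j <> w j by rewrite hz'j.
have := hlex z w (inRnD_full hr hz) (inRnD_full hr hw) j hjn hpre hjne.
have := hlex _ w (inRnD_full hr hz') (inRnD_full hr hw) j hjn hpre' hjne'.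
by rewrite hz'j dot_upd // in hcz' *; lia.
Qed.

(** * Moving one coordinate *)

Lemma walk (P S : nat -> Prop) (Q : nat -> nat -> Prop) (mu : nat -> nat) k0 :
  P k0 -> (forall k, P k -> ~ S k -> exists k', Q k k' \/ P k' /\ (mu k' < mu k)%N) ->
  exists k, P k /\ (S k \/ exists k', Q k k').
Proof.
move=> hP0 hstep.
suff hwalk : forall m k, (mu k < m)%N -> P k -> exists k, P k /\ (S k \/ exists k', Q k k').
  exact: hwalk _ _ (ltnSn _) hP0.
elim=> // m IH k hk hPk; have [hS|hS] := classic (S k); first by exists k; split => //; left.
have [k' [hQ|[hP' hlt]]] := hstep k hPk hS; first by exists k; split => //; right; exists k'.
exact: IH k' (leq_trans hlt hk) hP'.
Qed.

Definition in_box r n (u v : nat -> option nat) (z : nat -> nat) :=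
  forall i, (i < n)%N -> lbnd (u i) (r (z i)) /\ ubnd (v i) (r (z i)).

Definition sandwich r n A B (x y1 y2 : int) (z : nat -> nat) :=
  y1 + dot r n A z < x /\ x < y2 + dot r n B z.

Definition admissible r N d D n A B x y1 y2 u v z :=
  inRnD r N d D n z /\ dagger r n A B x y1 y2 u v z.

Definition gap_tight (r : nat -> nat) N D n (z : nat -> nat) :=
  exists i, (i < n)%N /\ r (z i) = r (next_coord N n z i + D)%N.

Definition box_tight (r : nat -> nat) n (u v : nat -> option nat) (z : nat -> nat) :=
  exists i, (i < n)%N /\ (u i = Some (r (z i)) \/ v i = Some (r (z i))).

Definition tight r N D n u v z := gap_tight r N D n z \/ box_tight r n u v z.

Lemma in_box_move r n u v z i k k' : in_box r n u v (upd z i k) ->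
  lbnd (u i) (r k') -> ubnd (v i) (r k') -> in_box r n u v (upd z i k').
Proof. by move=> hb hl hu j /hb; rewrite /upd; case: eqP => [-> _|]. Qed.

Lemma sandwich_move r n A B x y1 y2 z i k k' : (i < n)%N ->
  opv r (A i) k' <= opv r (A i) k -> opv r (B i) k <= opv r (B i) k' ->
  sandwich r n A B x y1 y2 (upd z i k) -> sandwich r n A B x y1 y2 (upd z i k').
Proof. by move=> hi hA hB; rewrite /sandwich !dot_upd //; lia. Qed.

Lemma lbnd_le (u : option nat) a b : (a <= b)%N -> lbnd u a -> lbnd u b.
Proof. by case: u => //= e hab h; apply: leq_trans hab. Qed.

Lemma ubnd_le (v : option nat) a b : (a <= b)%N -> ubnd v b -> ubnd v a.
Proof. by case: v => //= e hab; apply: leq_trans hab. Qed.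

Section Moves.
Variables (r : nat -> nat) (N d D n : nat) (A B : nat -> op) (x y1 y2 : int).
Variables (u v : nat -> option nat).
Hypotheses (hr : strictly_increasing r) (hd : (0 < d)%N) (hdD : (d %| D)%N).

Local Notation valid := (inRnD r N d D n).
Local Notation adm := (admissible r N d D n A B x y1 y2 u v).
Local Notation is_tight := (tight r N D n u v).
Local Notation sandwiched := (sandwich r n A B x y1 y2).

Lemma next_coord_idx z i : valid z -> (i < n)%N ->
  inRt_idx N d (next_coord N n z i).
Proof.
move=> hz hi; rewrite /next_coord; case: ifP => e; first by exists 0%N; rewrite muln0 addn0.
by have [] := hz i.+1; rewrite // ltn_neqAle e.
Qed.

Lemma inRnD_move z i k k' : (i < n)%N -> valid (upd z i k) -> inRt_idx N d k' ->
  (next_coord N n z i + D <= k')%N -> ((0 < i)%N -> (k' + D <= z i.-1)%N) ->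
  valid (upd z i k').
Proof.
move=> hi hz hk' hlo hhi j hj; have [hzj hgap] := hz j hj.
have [->|hji] := eqVneq j i.
  rewrite upd_same; split=> //.
  by rewrite -/(next_coord N n (upd z i k') i) next_coord_upd leq_enum.
rewrite !(upd_ne _ _ hji) in hzj hgap *; split=> //; move: hgap.
have [e|ne] := eqVneq j.+1 i; last by rewrite !upd_ne.
subst i; rewrite (ltn_eqF hi) !upd_same !leq_enum // => _.
exact: hhi.
Qed.

Lemma next_coord_prev z i k : (0 < i)%N -> (i < n)%N ->
  next_coord N n (upd z i k) i.-1 = k.
Proof. by move=> hi0 hi; rewrite /next_coord prednK // (ltn_eqF hi) upd_same. Qed.

Lemma inRnD_gap_prev z i k : (0 < i)%N -> (i < n)%N -> valid (upd z i k) ->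
  (k + D <= z i.-1)%N.
Proof.
move=> hi0 hi hz; have hi1 : (i.-1 < n)%N by rewrite prednK // ltnW.
have := inRnD_gap hr hz hi1; rewrite next_coord_prev // upd_ne // neq_ltn.
by rewrite prednK ?leqnn.
Qed.

Lemma lbnd_step_down i k : (forall e, u i = Some e -> inRt_elt r N d e) ->
  inRt_idx N d k -> lbnd (u i) (r k) -> u i <> Some (r k) -> lbnd (u i) (r (k - d)).
Proof.
move=> hu hk; case eu: (u i) => [e|] //= hek hne; have [s es] := hu e eu; subst e.
have hlt : (N + d * s < k)%N.
  by rewrite -(ltn_enum hr) ltn_neqAle hek andbT; apply/eqP => h; apply: hne; rewrite h.
by rewrite leq_enum //; have := inRt_idx_step hd (ex_intro _ s erefl) hk hlt; lia.
Qed.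

Lemma ubnd_step_up i k : (forall e, v i = Some e -> inRt_elt r N d e) ->
  inRt_idx N d k -> ubnd (v i) (r k) -> v i <> Some (r k) -> ubnd (v i) (r (k + d)).
Proof.
move=> hv hk; case ev: (v i) => [e|] //= hek hne; have [s es] := hv e ev; subst e.
have hlt : (k < N + d * s)%N.
  by rewrite -(ltn_enum hr) ltn_neqAle hek andbT; apply/eqP => h; apply: hne; rewrite h.
by rewrite leq_enum //; apply: inRt_idx_step hd hk (ex_intro _ s erefl) hlt.
Qed.

Lemma step_down z i k : (i < n)%N -> (forall e, u i = Some e -> inRt_elt r N d e) ->
  valid (upd z i k) -> in_box r n u v (upd z i k) -> ~ is_tight (upd z i k) ->
  [/\ valid (upd z i (k - d)), in_box r n u v (upd z i (k - d)) & (k - d + d = k)%N].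
Proof.
move=> hi hu hz hb hnt; have [hk _] := hz i hi; rewrite upd_same in hk.
have := next_coord_idx hz hi; rewrite next_coord_upd => hnext.
have hgap : (next_coord N n z i + D < k)%N.
  have := inRnD_gap hr hz hi; rewrite next_coord_upd upd_same leq_eqVlt => /predU1P [e|//].
  by case: hnt; left; exists i; rewrite next_coord_upd upd_same e.
have hstep := inRt_idx_step hd (inRt_idx_addD hdD hnext) hk hgap.
have hNnext : (N <= next_coord N n z i)%N by case: hnext => t ->; apply: leq_addr.
have hk' : inRt_idx N d (k - d) by apply: inRt_idx_subd => //; lia.
have [hlo hup] := hb i hi; rewrite upd_same in hlo hup.
split; last by lia.
  apply: inRnD_move (hi) (hz) hk' _ _; first by lia.
  by move=> hi0; have := inRnD_gap_prev hi0 hi hz; lia.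
apply: in_box_move hb _ (ubnd_le _ hup); last by rewrite leq_enum // leq_subr.
by apply: lbnd_step_down => // e; apply: hnt; right; exists i; split=> //; left; rewrite upd_same.
Qed.

Lemma step_up z i k : (i < n)%N -> (forall e, v i = Some e -> inRt_elt r N d e) ->
  valid (upd z i k) -> in_box r n u v (upd z i k) -> ~ is_tight (upd z i k) ->
  valid (upd z i (k + d)) /\ in_box r n u v (upd z i (k + d)).
Proof.
move=> hi hv hz hb hnt; have [hk _] := hz i hi; rewrite upd_same in hk.
have hk' : inRt_idx N d (k + d) by case: hk => t ->; exists t.+1; rewrite mulnS; lia.
have [hlo hup] := hb i hi; rewrite upd_same in hlo hup.
split.
  apply: inRnD_move (hi) (hz) hk' _ _.
    by have := inRnD_gap hr hz hi; rewrite next_coord_upd upd_same; lia.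
  move=> hi0; have hi1 : (i.-1 < n)%N by rewrite prednK // ltnW.
  have := inRnD_gap_prev hi0 hi hz; rewrite leq_eqVlt => /predU1P [e|hlt].
    by case: hnt; left; exists i.-1; rewrite next_coord_prev // upd_ne ?e // neq_ltn prednK ?leqnn.
  have [hzi _] := hz i.-1 hi1; rewrite upd_ne ?neq_ltn ?prednK ?leqnn // in hzi.
  by have := inRt_idx_step hd (inRt_idx_addD hdD hk) hzi hlt; lia.
apply: in_box_move hb (lbnd_le _ hlo) _; first by rewrite leq_enum // leq_addr.
by apply: ubnd_step_up => // e; apply: hnt; right; exists i; split=> //; right; rewrite upd_same.
Qed.

Lemma walk_down z i : (i < n)%N -> (forall e, u i = Some e -> inRt_elt r N d e) -> adm z ->
  exists k, adm (upd z i k) /\ (is_tight (upd z i k) \/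
    exists k', [/\ (k' + d = k)%N, valid (upd z i k') & ~ sandwiched (upd z i k')]).
Proof.
move=> hi hu hz.
apply: (@walk (fun k => adm (upd z i k)) (fun k => is_tight (upd z i k))
  (fun k k' => [/\ (k' + d = k)%N, valid (upd z i k') & ~ sandwiched (upd z i k')]) id (z i)).
  by rewrite upd_id.
move=> k [hzk [hs1 [hs2 hb]]] hnt; have [hz' hb' hkk] := step_down hi hu hzk hb hnt.
exists (k - d)%N; have [[hs1' hs2']|hs] := classic (sandwiched (upd z i (k - d))); last by left.
by right; split; [|lia].
Qed.

(* An upper bound for coordinate i; the default 0 (for i = 0 and v_0 = +oo)
   is never used, see [le_coord_cap]. *)
Definition coord_cap z i := if (0 < i)%N then z i.-1 else odflt 0%N (v i).

Lemma le_coord_cap z i k : (i < n)%N -> ((0 < i)%N \/ v i <> None) ->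
  valid (upd z i k) -> in_box r n u v (upd z i k) -> (k <= coord_cap z i)%N.
Proof.
move=> hi hcap hz hb; rewrite /coord_cap; case: ifP => hi0.
  by have := inRnD_gap_prev hi0 hi hz; lia.
have [_] := hb i hi; rewrite upd_same; case: hcap => [|]; first by rewrite hi0.
by case: (v i) => //= e _ he; apply: leq_trans (leq_id_enum hr k) he.
Qed.

Lemma walk_up z i : (i < n)%N -> (forall e, v i = Some e -> inRt_elt r N d e) ->
  ((0 < i)%N \/ v i <> None) -> adm z ->
  exists k, adm (upd z i k) /\ (is_tight (upd z i k) \/
    exists k', [/\ (k < k')%N, valid (upd z i k') & ~ sandwiched (upd z i k')]).
Proof.
move=> hi hv hcap hz.
apply: (@walk (fun k => adm (upd z i k)) (fun k => is_tight (upd z i k))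
  (fun k k' => [/\ (k < k')%N, valid (upd z i k') & ~ sandwiched (upd z i k')])
  (fun k => coord_cap z i - k)%N (z i)).
  by rewrite upd_id.
move=> k [hzk [hs1 [hs2 hb]]] hnt; have [hz' hb'] := step_up hi hv hzk hb hnt.
exists (k + d)%N; have [[hs1' hs2']|hs] := classic (sandwiched (upd z i (k + d))); last first.
  by left; split=> //; lia.
right; split; first by split=> //; do 2 split=> //.
by have := le_coord_cap hi hcap hz' (hb'); lia.
Qed.

Lemma descend_to_tight z i : (i < n)%N -> (forall e, u i = Some e -> inRt_elt r N d e) ->
  nondecr_from r D (A i) -> nondecr_from r D (opp_op (B i)) -> adm z ->
  exists w, adm w /\ is_tight w.
Proof.
move=> hi hu hA hB hz; have [k [hk [ht|[k' [hkk hz' hns]]]]] := walk_down hi hu hz.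
  by exists (upd z i k).
have hlt : (k' < k)%N by lia.
case: hns; have hDk : (D <= k')%N by have := inRnD_gap hr hz' hi; rewrite upd_same; lia.
case: hk => _ [hs1 [hs2 _]]; apply: sandwich_move (hi) _ _ (conj hs1 hs2).
  exact: hA _ _ hDk (ltnW hlt).
by have := hB _ _ hDk (ltnW hlt); rewrite !opv_opp lerN2.
Qed.

Lemma ascend_to_tight z i : (i < n)%N -> (forall e, v i = Some e -> inRt_elt r N d e) ->
  ((0 < i)%N \/ v i <> None) ->
  nondecr_from r D (opp_op (A i)) -> nondecr_from r D (B i) -> adm z ->
  exists w, adm w /\ is_tight w.
Proof.
move=> hi hv hcap hA hB hz; have [k [hk [ht|[k' [hlt hz' hns]]]]] := walk_up hi hv hcap hz.
  by exists (upd z i k).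
case: hns; case: hk => hzk [hs1 [hs2 _]].
have hDk : (D <= k)%N by have := inRnD_gap hr hzk hi; rewrite upd_same; lia.
apply: sandwich_move (hi) _ _ (conj hs1 hs2); last exact: hB _ _ hDk (ltnW hlt).
by have := hA _ _ hDk (ltnW hlt); rewrite !opv_opp lerN2.
Qed.

Lemma zero_operator_case z i : (i < n)%N ->
  (forall j, (j < n)%N -> forall e, u j = Some e -> inRt_elt r N d e) ->
  (forall j, (j < n)%N -> forall e, v j = Some e -> inRt_elt r N d e) ->
  trend_from r D (A i) -> trend_from r D (B i) -> op_eq0 r (A i) \/ op_eq0 r (B i) ->
  adm z ->
  (v 0%N = None /\
     ((op_eq0 r (A 0%N) /\ op_pos r (B 0%N)) \/ (op_neg r (A 0%N) /\ op_eq0 r (B 0%N))))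
  \/ exists w, adm w /\ is_tight w.
Proof.
move=> hi hu hv hA hB h0 hz.
have [[hA' hB']|[hA' hB' hexc]] := zero_operator_direction hA hB h0.
  by right; apply: descend_to_tight hi (hu i hi) hA' hB' hz.
have [i0|hcap] := boolP ((i == 0%N) && (v i == None)).
  by move: i0 hexc => /andP [/eqP -> /eqP ->]; left.
right; apply: ascend_to_tight hi (hv i hi) _ hA' hB' hz.
by move: hcap; rewrite negb_and lt0n => /orP [->|/eqP]; [left|right].
Qed.

Lemma nonzero_operator_case z : (0 < n)%N ->
  (forall j, (j < n)%N -> forall e, u j = Some e -> inRt_elt r N d e) ->
  lex_dominant r D n A -> lex_dominant r D n (fun i => opp_op (B i)) ->
  monotone_from r D (A n.-1) -> monotone_from r D (opp_op (B n.-1)) -> adm z ->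
  exists w, adm w /\ (is_tight w \/ isP r N d D n A (x - y1) w \/
                      isP r N d D n (fun i => opp_op (B i)) (y2 - x) w).
Proof.
move=> hn hu hlexA hlexB hmA hmB hz; have hn1 : (n.-1 < n)%N by rewrite prednK.
have [k [hk [ht|[k' [hkk hz' hns]]]]] := walk_down hn1 (hu _ hn1) hz.
  by exists (upd z n.-1 k); split=> //; left.
exists (upd z n.-1 k); split=> //; right; case: hk => hzk [hs1 [hs2 _]].
have hkk' : (k' + d = upd z n.-1 k n.-1)%N by rewrite upd_same.
have hz'' : valid (upd (upd z n.-1 k) n.-1 k') by rewrite upd_upd.
have [hA'|hA'] := classic (y1 + dot r n A (upd z n.-1 k') < x).
  right; apply: (isP_of_last_step hr hd hn hlexB hmB hzk hz'' hkk'); rewrite !dot_opp ?upd_upd.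
    lia.
  have hB' : ~ (x < y2 + dot r n B (upd z n.-1 k')) by move=> h; apply: hns; split.
  lia.
left; apply: (isP_of_last_step hr hd hn hlexA hmA hzk hz'' hkk'); rewrite ?upd_upd; lia.
Qed.

End Moves.

Unset Implicit Arguments.

Theorem mainTheorem10 (r : nat -> nat) (hr : strictly_increasing r)
  (hcp : congruence_periodic r) (hsp : sparse r)
  (d : nat) (hd : (0 < d)%N) (N : nat) (n : nat) (hn : (0 < n)%N)
  (A B : nat -> op) :
  exists Delta0 : nat, forall Delta : nat, (d %| Delta)%N -> (Delta0 <= Delta)%N ->
  forall (x y1 y2 : int) (u v : nat -> option nat),
    (forall i, (i < n)%N -> forall e, u i = Some e -> inRt_elt r N d e) ->
    (forall i, (i < n)%N -> forall e, v i = Some e -> inRt_elt r N d e) ->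
    (exists z, inRnD r N d Delta n z /\ dagger r n A B x y1 y2 u v z) ->
    (v 0%N = None /\
       ((op_eq0 r (A 0%N) /\ op_pos r (B 0%N)) \/ (op_neg r (A 0%N) /\ op_eq0 r (B 0%N))))
    \/
    (exists z, inRnD r N d Delta n z /\ dagger r n A B x y1 y2 u v z /\
       ((exists i, (i < n)%N /\ r (z i) = r ((if i.+1 == n then N else z i.+1) + Delta)%N)
        \/ (exists i, (i < n)%N /\ (u i = Some (r (z i)) \/ v i = Some (r (z i))))
        \/ ((forall i, (i < n)%N -> ~ op_eq0 r (A i) /\ ~ op_eq0 r (B i)) /\
            dot_inj r Delta n A /\ dot_inj r Delta n (fun i => opp_op (B i)) /\
            (isP r N d Delta n A (x - y1) z \/
             isP r N d Delta n (fun i => opp_op (B i)) (y2 - x) z)))).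
Proof.
have [KA hKA] := trend_uniform hr hsp n A; have [KB hKB] := trend_uniform hr hsp n B.
have [[i [hi h0]]|hnz] := classic (exists i, (i < n)%N /\ (op_eq0 r (A i) \/ op_eq0 r (B i))).
  exists (KA + KB) => D hdD hD x y1 y2 u v hu hv [z hz].
  have [hAD hBD] : (KA <= D)%N /\ (KB <= D)%N by lia.
  have [hexc|[w [[hw hdw] ht]]] :=
    zero_operator_case hr hd hdD hi hu hv (hKA D hAD i hi) (hKB D hBD i hi) h0 hz.
    by left.
  by right; exists w; do 2 split=> //; case: ht; [left|right; left].
have hnzA i : (i < n)%N -> ~ op_eq0 r (A i) by move=> hi h; apply: hnz; exists i; split=> //; left.
have hnzB i : (i < n)%N -> ~ op_eq0 r (B i) by move=> hi h; apply: hnz; exists i; split=> //; right.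
have [TA hTA] := lex_dominant_eventually hr hsp hnzA.
have [TB hTB] := lex_dominant_eventually hr hsp (fun i hi => op_neq0_opp (hnzB i hi)).
exists (KA + KB + TA + TB) => D hdD hD x y1 y2 u v hu _ [z hz].
have hn1 : (n.-1 < n)%N by rewrite prednK.
have [hAD hBD hTAD hTBD] : [/\ KA <= D, KB <= D, TA <= D & TB <= D]%N by split; lia.
have hmA := trend_monotone (hnzA _ hn1) (hKA D hAD _ hn1).
have hmB := monotone_from_opp (trend_monotone (hnzB _ hn1) (hKB D hBD _ hn1)).
have [w [[hw hdw] hcase]] :=
  nonzero_operator_case hr hd hdD hn hu (hTA D hTAD) (hTB D hTBD) hmA hmB hz.
right; exists w; do 2 split=> //.
case: hcase => [[hI|hII]|hP]; [by left|by right; left|right; right].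
split=> [i hi|]; first by split; [exact: hnzA|exact: hnzB].
split; first exact: lex_dominant_dot_inj (hTA D hTAD).
by split; first exact: lex_dominant_dot_inj (hTB D hTBD).
Qed.
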